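(* Let $(x,y,C)\in Q(r)$ with $r\ge5$, let $d(j_1,j_2):=1-y_{j_1,j_2}$, fix $j^*\in J$ and $0<\beta<1$, and put $U:=\{j\in J: d(j,j^* )\le\beta\}$. Then $|U|\le\frac{c}{1-\beta}$.
   Context: Fix a finite set $J$ of jobs, a partial order $\prec$ on $J$, and $c,S,m\in\mathbb N$. Sherali–Adams lift: for a polytope $K=\{x\in\mathbb R^{V}:Ax\ge b\}$ on a finite index set $V$ and $r\ge0$, $SA_r(K)$ is the set of vectors $y$ indexed by subsets of $V$ of size at most $r+1$ with $y_\emptyset=1$ and, for every row $\ell$ and all $I,J'\subseteq V$ with $|I|+|J'|\le r$, $\sum_{H\subseteq J'}(-1)^{|H|}\big(\sum_{v\in V}A_{\ell,v}y_{I\cup H\cup\{v\}}-b_\ell y_{I\cup H}\big)\ge0$. Scheduling LP: let $V=J\times[m]\times\{0,\dots,S-1\}$ and let $K\subseteq\mathbb R^V$ be the set of $x$ with $\sum_{i\in[m]}\sum_{s}x_{j,i,s}=1$ for all $j\in J$, $\sum_{j\in J}x_{j,i,s}\le c$ for all $i,s$, and $0\le x_{j,i,s}\le1$. For $x\in SA_r(K)$ write $x_{j,i,s}=x_{\{(j,i,s)\}}$ and $x_{(j_1,i_1,s_1),(j_2,i_2,s_2)}=x_{\{(j_1,i_1,s_1),(j_2,i_2,s_2)\}}$. $Q(r)$ is the set of triples $(x,y,C)$ with $x\in SA_r(K)$, $y\in\mathbb R^{J\times J}$, $C\in\mathbb R^J$ satisfying $y_{j_1,j_2}=\sum_{s=0}^{S-1}\sum_{i\in[m]}x_{(j_1,i,s),(j_2,i,s)}$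 for all $j_1,j_2\in J$, $C_{j_2}\ge C_{j_1}+(1-y_{j_1,j_2})$ for all $j_1\prec j_2$, and $C_j\ge0$ for all $j$. *)

From HB Require Import structures.
From mathcomp Require Import all_boot all_order all_algebra.
Set Implicit Arguments. Unset Strict Implicit. Unset Printing Implicit Defensive.
Import Order.TTheory GRing.Theory Num.Theory.
Local Open Scope ring_scope.

(* Generic Sherali-Adams lift of K = {x : A x >= b}, rows indexed by [Row].
   Vectors y are indexed by subsets of V; only values on sets of size <= r+1
   are ever constrained. *)
Definition SA (R : numDomainType) (V : finType) (Row : Type)
  (A : Row -> V -> R) (b : Row -> R) (r : nat) (y : {set V} -> R) : Prop :=
  y set0 = 1 /\
  forall (l : Row) (I J' : {set V}), (#|I| + #|J'| <= r)%N ->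
    0 <= \sum_(H in powerset J')
           (-1) ^+ #|H| * (\sum_(v : V) A l v * y (I :|: H :|: [set v])
                           - b l * y (I :|: H)).

Definition SV (J : finType) (m S : nat) : finType := ((J * 'I_m) * 'I_S)%type.

Inductive srow (J : finType) (m S : nat) : Type :=
| AssignGe of J                 (*  sum_{i,s} x_{j,i,s} >= 1 *)
| AssignLe of J                 (* -sum_{i,s} x_{j,i,s} >= -1 *)
| CapRow of 'I_m & 'I_S         (* -sum_j x_{j,i,s} >= -c *)
| NonNeg of SV J m S            (*  x_v >= 0 *)
| AtMost1 of SV J m S.          (* -x_v >= -1 *)

Definition schedA (R : numDomainType) (J : finType) (m S : nat)
  (l : srow J m S) (v : SV J m S) : R :=
  match l with
  | AssignGe j => if v.1.1 == j then 1 else 0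
  | AssignLe j => if v.1.1 == j then -1 else 0
  | CapRow i s => if (v.1.2 == i) && (v.2 == s) then -1 else 0
  | NonNeg w => if v == w then 1 else 0
  | AtMost1 w => if v == w then -1 else 0
  end.

Definition schedb (R : numDomainType) (J : finType) (m S : nat) (c : nat)
  (l : srow J m S) : R :=
  match l with
  | AssignGe _ => 1
  | AssignLe _ => -1
  | CapRow _ _ => - (c%:R)
  | NonNeg _ => 0
  | AtMost1 _ => -1
  end.

Definition SA_K (R : numDomainType) (J : finType) (c S m r : nat)
  (x : {set SV J m S} -> R) : Prop :=
  SA (@schedA R J m S) (@schedb R J m S c) r x.

Definition Qr (R : numDomainType) (J : finType) (prec : rel J) (c S m r : nat)
  (x : {set SV J m S} -> R) (y : J -> J -> R) (C : J -> R) : Prop :=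
  [/\ SA_K c r x,
      (forall j1 j2 : J, y j1 j2 =
         \sum_(s < S) \sum_(i < m) x [set ((j1, i), s); ((j2, i), s)]),
      (forall j1 j2 : J, prec j1 j2 -> C j2 >= C j1 + (1 - y j1 j2))
    & (forall j : J, C j >= 0)].

Definition strict_porder (J : finType) (prec : rel J) : Prop :=
  irreflexive prec /\ transitive prec.

Arguments Qr {R J} prec c S m r x y C.

From HB Require Import structures.
From mathcomp Require Import all_boot all_order all_algebra.
From mathcomp Require Import reals.
Import Order.TTheory GRing.Theory Num.Theory.
Local Open Scope ring_scope.

(* Write y_{j,j*} = sum_{i,s} x_{(j,i,s),(j*,i,s)} for the
   co-scheduling mass of j with j*.
   Summing the capacity bounds over all slots, sum_j y_{j,j*} <= c.  Every job
   of U = {j | 1 - y_{j,j*} <= beta} contributes at least 1 - beta to this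
   sum, which is the Markov-type counting bound |U| (1 - beta) <= c. *)

Lemma SA_level_one {R : numDomainType} {V : finType} {Row : Type}
    {A : Row -> V -> R} {b : Row -> R} {r : nat} {y : {set V} -> R}
    (l : Row) (I : {set V}) :
  SA A b r y -> (#|I| <= r)%N ->
  0 <= \sum_v A l v * y (I :|: [set v]) - b l * y I.
Proof.
move=> [_ lift] leIr; have := lift l I set0; rewrite cards0 addn0 => /(_ leIr).
by rewrite powerset0 big_set1 cards0 expr0 mul1r !setU0.
Qed.

Lemma sum_SV (R : numDomainType) (J : finType) (m S : nat)
    (F : SV J m S -> R) :
  \sum_v F v = \sum_(j : J) \sum_(i < m) \sum_(s < S) F ((j, i), s).
Proof. by rewrite pair_big /= pair_big /=; apply: eq_bigr => -[[j i] s]. Qed.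

Section SchedulingLift.

Context {R : numDomainType} {J : finType} {c S m r : nat}.
Context (x : {set SV J m S} -> R).
Hypothesis x_SA : SA_K c r x.

Lemma lift_ge0 (I : {set SV J m S}) (v : SV J m S) :
  (#|I| <= r)%N -> 0 <= x (I :|: [set v]).
Proof.
move=> leIr; have := SA_level_one (NonNeg v) I x_SA leIr.
rewrite /= mul0r subr0 (bigD1 v) //= eqxx mul1r big1 ?addr0 // => w /negbTE->.
by rewrite mul0r.
Qed.

Lemma assign_lift_le (I : {set SV J m S}) (j : J) :
  (#|I| <= r)%N ->
  \sum_(i < m) \sum_(s < S) x (I :|: [set ((j, i), s)]) <= x I.
Proof.
move=> leIr; have := SA_level_one (AssignLe m S j) I x_SA leIr.
rewrite /= mulN1r opprK sum_SV (bigD1 j) //= [X in _ + X + _]big1; last first.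
  move=> k /negbTE nkj; apply: big1 => i _.
  by apply: big1 => s _; rewrite /= nkj mul0r.
rewrite addr0 addrC -[X in _ + X]opprK subr_ge0 -sumrN.
move=> /(le_trans _)-> //; apply: ler_sum => i _; rewrite -sumrN.
by apply: ler_sum => s _; rewrite /= eqxx mulN1r opprK.
Qed.

Lemma capacity_lift_le (I : {set SV J m S}) (i : 'I_m) (s : 'I_S) :
  (#|I| <= r)%N ->
  \sum_(j : J) x (I :|: [set ((j, i), s)]) <= c%:R * x I.
Proof.
move=> leIr; have := SA_level_one (CapRow J i s) I x_SA leIr.
rewrite /= mulNr opprK sum_SV addrC -[X in _ + X]opprK subr_ge0 -sumrN.
move=> /(le_trans _)-> //; apply: ler_sum => j _.
rewrite (bigD1 i) //= [X in _ + X]big1; last first.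
  by move=> i' /negbTE ni'i; apply: big1 => s' _; rewrite /= ni'i mul0r.
rewrite addr0 (bigD1 s) //= [X in _ + X]big1; last first.
  by move=> s' /negbTE ns's; rewrite /= ns's andbF mul0r.
by rewrite addr0 /= !eqxx mulN1r opprK.
Qed.

Definition cosched (j1 j2 : J) : R :=
  \sum_(s < S) \sum_(i < m) x [set ((j1, i), s); ((j2, i), s)].

(* Lifting by a single variable requires level r >= 1. *)
Hypothesis r_gt0 : (0 < r)%N.

Lemma cosched_ge0 (j1 j2 : J) : 0 <= cosched j1 j2.
Proof.
apply: sumr_ge0 => s _; apply: sumr_ge0 => i _.
by rewrite setUC; apply: lift_ge0; rewrite cards1.
Qed.

(* Summed over its partners, the co-scheduling mass of a job is at most c:
   capacity lifted by each slot of j, then the assignment row of j. *)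
Lemma sum_cosched_le (jstar : J) : \sum_(j : J) cosched j jstar <= c%:R.
Proof.
have x_empty : x set0 = 1 by case: x_SA.
have slot_le i s : \sum_(j : J) x [set ((j, i), s); ((jstar, i), s)]
    <= c%:R * x [set ((jstar, i), s)].
  by under eq_bigr do rewrite setUC; apply: capacity_lift_le; rewrite cards1.
rewrite exchange_big /=.
apply: (le_trans (y := \sum_(s < S) \sum_(i < m) c%:R * x [set ((jstar, i), s)])).
  by apply: ler_sum => s _; rewrite exchange_big; apply: ler_sum => i _;
    exact: slot_le.
rewrite exchange_big /=; under eq_bigr do rewrite -mulr_sumr.
rewrite -mulr_sumr -[X in _ <= X]mulr1; apply: ler_wpM2l => //.
rewrite -x_empty (le_trans _ (assign_lift_le set0 jstar _)) ?cards0 //.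
by apply: ler_sum => i _; apply: ler_sum => s _; rewrite set0U.
Qed.

End SchedulingLift.

Lemma card_large_values_le (R : realFieldType) (T : finType) (f : T -> R)
    (c beta : R) :
  (forall t, 0 <= f t) -> \sum_t f t <= c -> beta < 1 ->
  #|[set t | 1 - f t <= beta]|%:R <= c / (1 - beta).
Proof.
move=> f_ge0 sum_le beta_lt1; have gap_gt0 : 0 < 1 - beta by rewrite subr_gt0.
rewrite ler_pdivlMr //; set U := [set t | _].
have U_mass : #|U|%:R * (1 - beta) <= \sum_(t in U) f t.
  rewrite mulrC mulr_natr -sumr_const; apply: ler_sum => t.
  by rewrite inE lerBlDr addrC -lerBlDr.
have U_sub : \sum_(t in U) f t <= \sum_t f t.
  by rewrite [leRHS](bigID (mem U)) /= lerDl sumr_ge0.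
exact: le_trans U_mass (le_trans U_sub sum_le).
Qed.

(* Only the assignment, capacity and nonnegativity constraints of the lift
   (and the definition of y) are used. *)
Theorem mainTheorem10 (R : realType) (J : finType) (prec : rel J)
  (c S m r : nat) (x : {set SV J m S} -> R) (y : J -> J -> R) (C : J -> R) :
  strict_porder prec ->
  Qr prec c S m r x y C ->
  (5 <= r)%N ->
  forall (jstar : J) (beta : R), 0 < beta -> beta < 1 ->
  (#|[set j : J | 1 - y j jstar <= beta]|)%:R <= c%:R / (1 - beta).
Proof.
move=> _ [x_SA y_def _ _] r_ge5 jstar beta _ beta_lt1.
have r_gt0 : (0 < r)%N by apply: leq_trans r_ge5.
apply: card_large_values_le => // [j|].
  by rewrite y_def; exact: (cosched_ge0 _ x_SA r_gt0).
under eq_bigr do rewrite y_def.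
exact: (sum_cosched_le _ x_SA r_gt0).
Qed.
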